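(* In an $m$-partial SCS, let $r$ and $r'$ be rings (not necessarily distinct) that cross each other at a crossing point $c$, and let $u$ and $u'$ be robots in $r$ and $r'$, respectively. If there are two paths of equal length, one from $u$ to $c$ in $r$ and one from $u'$ to $c$ in $r'$ (each possibly longer than its ring), then neither $u$ nor $u'$ is starving.
   Context: Let $T=\{C_1,\dots,C_n\}$ be pairwise disjoint unit circles in the plane (trajectories) and $\epsilon<0.5$ a communication range. The graph of potential links $G_\epsilon(T)$ has the circle centers as nodes and an edge $\{i,j\}$ whenever the centers of $C_i,C_j$ are at distance at most $2+\epsilon$; it is assumed connected. Points of a circle are identified with angles (modulo $2\pi$), and a robot traverses a circle in one time unit. A schedule is a pair $(f,g)$, $f:T\to[0,2\pi)$, $g:T\to\{-1,1\}$ ($1$ = counterclockwise); the robot on $C_i$ is at angle $f(C_i)+2\pi g(C_i)t$ at time $t$. A communication graph $G=(V,E)$ is a connected spanning subgraph of $G_\epsilon(T)$. The link position $\phi_{ij}$ is the point of $C_i$ closest to $C_j$. A schedule is $G$-synchronized if for every $\{i,j\}\in E$ the robot on $C_i$ is at $\phi_{ij}$ exactly when the robot on $C_j$ is at $\phi_{ji}$. An SCS with communication graph $G$ consists of $n$ robots, one per circle, moving under a $G$-synchronized schedule with $g(C_i)=-g(C_j)$ for all $\{i,j\}\in E$. Shifting protocol: when a robot on $C_i$ reaches $\phi_{ij}$ and there is no robot at $\phi_{ji}$, it moves to $C_j$ and thereafter follows the schedule of $C_j$. An $m$-partial SCS is obtained by removing $n-m$ robots, the remaining $m$ applying the shifting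 protocol. A surviving robot starves if every time it arrives at a link position the corresponding neighbor is absent. A ring is the closed path traversed by a starving robot (following the assigned direction on each circle and always shifting to the neighboring circle at link positions). The length of a path along a ring is the total length of circle arcs it traverses, with multiplicity, ignoring transitions between circles; a path in a ring follows the travel direction of the ring and may contain full tours. The crossing point of neighboring circles $C_i,C_j$ is the midpoint of the segment joining $\phi_{ij}$ and $\phi_{ji}$; rings pass through crossing points. *)

From Stdlib Require Import Reals Lra Relations.
Open Scope R_scope.

Definition point := (R * R)%type.

Definition dist (p q : point) : R :=
  sqrt ((fst p - fst q) ^ 2 + (snd p - snd q) ^ 2).

(* C_1..C_n : unit circles with centers ctr i (i < n), pairwise disjoint. *)
Definition disjoint_unit_circles (n : nat) (ctr : nat -> point) : Prop :=
  forall i j, (i < n)%nat -> (j < n)%nat -> i <> j -> 2 < dist (ctr i) (ctr j).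

Definition potential_link (n : nat) (ctr : nat -> point) (eps : R) (i j : nat) : Prop :=
  (i < n)%nat /\ (j < n)%nat /\ i <> j /\ dist (ctr i) (ctr j) <= 2 + eps.

Definition graph_connected (n : nat) (E : nat -> nat -> Prop) : Prop :=
  forall i j, (i < n)%nat -> (j < n)%nat ->
    clos_refl_trans nat (fun a b => (a < n)%nat /\ (b < n)%nat /\ E a b) i j.

Definition comm_graph (n : nat) (ctr : nat -> point) (eps : R)
    (E : nat -> nat -> Prop) : Prop :=
  (forall i j, E i j -> potential_link n ctr eps i j) /\
  (forall i j, E i j -> E j i) /\
  graph_connected n E.

(* link position phi_ij : the point of C_i closest to C_j *)
Definition link_pos (ctr : nat -> point) (i j : nat) : point :=
  let d := dist (ctr i) (ctr j) in
  (fst (ctr i) + (fst (ctr j) - fst (ctr i)) / d,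
   snd (ctr i) + (snd (ctr j) - snd (ctr i)) / d).

Definition crossing_point (ctr : nat -> point) (i j : nat) : point :=
  ((fst (link_pos ctr i j) + fst (link_pos ctr j i)) / 2,
   (snd (link_pos ctr i j) + snd (link_pos ctr j i)) / 2).

Definition schedule (n : nat) (f g : nat -> R) : Prop :=
  forall i, (i < n)%nat -> 0 <= f i < 2 * PI /\ (g i = 1 \/ g i = -1).

Definition sched (ctr : nat -> point) (f g : nat -> R) (i : nat) (t : R) : point :=
  (fst (ctr i) + cos (f i + 2 * PI * g i * t),
   snd (ctr i) + sin (f i + 2 * PI * g i * t)).

Definition at_link (ctr : nat -> point) (f g : nat -> R) (i j : nat) (t : R) : Prop :=
  sched ctr f g i t = link_pos ctr i j.

Definition synchronized (ctr : nat -> point) (f g : nat -> R)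
    (E : nat -> nat -> Prop) : Prop :=
  forall i j, E i j -> forall t, at_link ctr f g i j t <-> at_link ctr f g j i t.

Definition SCS (ctr : nat -> point) (f g : nat -> R) (E : nat -> nat -> Prop) : Prop :=
  synchronized ctr f g E /\ (forall i j, E i j -> g i = - g j).

Definition left_lim (w : R -> nat) (t : R) (i : nat) : Prop :=
  exists d, 0 < d /\ forall s, t - d < s < t -> w s = i.

Definition right_const (w : R -> nat) : Prop :=
  forall t, exists d, 0 < d /\ forall s, t <= s < t + d -> w s = w t.

Definition has_left_lims (w : R -> nat) : Prop :=
  forall t, exists i, left_lim w t i.

(* circle j is occupied just before time t (i.e. before the shifts at time t) *)
Definition occupied (m : nat) (loc : nat -> R -> nat) (t : R) (j : nat) : Prop :=
  exists k, (k < m)%nat /\ left_lim (loc k) t j.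

(* An m-partial SCS run: robots k < m start (just before time 0) on distinct
   circles init k; loc k t is the circle of robot k at time t (after the shifts
   occurring at time t); robot k is at position sched (loc k t) t. *)
Definition partial_SCS_run (n m : nat) (ctr : nat -> point) (f g : nat -> R)
    (E : nat -> nat -> Prop) (init : nat -> nat) (loc : nat -> R -> nat) : Prop :=
  (forall k, (k < m)%nat -> (init k < n)%nat) /\
  (forall k k', (k < m)%nat -> (k' < m)%nat -> init k = init k' -> k = k') /\
  forall k, (k < m)%nat ->
    right_const (loc k) /\ has_left_lims (loc k) /\
    (forall t, t < 0 -> loc k t = init k) /\
    (forall t i, 0 <= t -> left_lim (loc k) t i ->
       (exists j, E i j /\ at_link ctr f g i j t /\ ~ occupied m loc t j /\ loc k t = j) \/
       (~ (exists j, E i j /\ at_link ctr f g i j t /\ ~ occupied m loc t j)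
        /\ loc k t = i)).

(* robot k starves: every time it arrives at a link position phi_ij,
   no robot is at phi_ji (equivalently on C_j, by synchronization) *)
Definition starving (m : nat) (ctr : nat -> point) (f g : nat -> R)
    (E : nat -> nat -> Prop) (loc : nat -> R -> nat) (k : nat) : Prop :=
  forall t i j, 0 <= t -> left_lim (loc k) t i -> E i j -> at_link ctr f g i j t ->
    ~ occupied m loc t j.

(* Ring traversal: trajectory of a (virtual) starving robot starting on circle i0
   at time t0, following the schedule and always shifting at link positions.
   At time s >= t0 it is at position sched (v s) s; after time s it has traversed
   a path along the ring of length 2*PI*(s - t0). *)
Definition ring_traj (ctr : nat -> point) (f g : nat -> R) (E : nat -> nat -> Prop)
    (t0 : R) (i0 : nat) (v : R -> nat) : Prop :=
  right_const v /\ has_left_lims v /\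
  (forall t, t < t0 -> v t = i0) /\
  (forall t i, t0 <= t -> left_lim v t i ->
     (exists j, E i j /\ at_link ctr f g i j t /\ v t = j) \/
     (~ (exists j, E i j /\ at_link ctr f g i j t) /\ v t = i)).

(* the ring traversal v reaches the crossing point of C_i, C_j at time T,
   coming from C_i (it is at phi_ij on C_i and crosses over to C_j) *)
Definition reaches_crossing (ctr : nat -> point) (f g : nat -> R)
    (E : nat -> nat -> Prop) (v : R -> nat) (T : R) (i j : nat) : Prop :=
  E i j /\ left_lim v T i /\ at_link ctr f g i j T.

From Pilot Require Import Defs.
From Stdlib Require Import Reals Lra Lia Classical.
Open Scope R_scope.

(** If [u] starves it never finds a free neighbour, so at every link position
    it shifts exactly as its ring does: [u] keeps following [r].  On the other
    hand a ring that carries a robot never becomes empty: when the ring leaves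
    a circle at a link position, the robot there either shifts along with it,
    or it stays because the next circle of the ring is occupied, and the robot
    occupying that circle cannot leave towards an occupied circle.  Hence just
    before the common time at which [r] reaches the crossing point from [C_i]
    and [r'] reaches it from [C_j], the circle [C_j] is occupied, so [u] does
    not starve when it reaches [phi_ij]; symmetrically for [u']. *)

Lemma ex_common_radius (m : nat) (Q : nat -> R -> Prop) :
  (forall k d d', 0 < d' <= d -> Q k d -> Q k d') ->
  (forall k, (k < m)%nat -> exists d, 0 < d /\ Q k d) ->
  exists D, 0 < D /\ forall k, (k < m)%nat -> Q k D.
Proof.
  intros Qmono. induction m as [|m IH]; intros Qex.
  - exists 1. split; [lra | intros k Hk; lia].
  - destruct IH as [D [HD QD]]; [intros k Hk; apply Qex; lia |].
    destruct (Qex m (Nat.lt_succ_diag_r m)) as [d [Hd Qd]].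
    exists (Rmin D d). pose proof (Rmin_pos D d HD Hd).
    split; [assumption |]. intros k Hk.
    destruct (Nat.eq_dec k m) as [-> | Hne].
    + apply (Qmono m d); [split; [assumption | apply Rmin_r] | exact Qd].
    + apply (Qmono k D); [split; [assumption | apply Rmin_l] | apply QD; lia].
Qed.

Lemma real_induction (P : R -> Prop) (a t0 : R) : a < t0 ->
  (forall s, a < s < t0 -> P s) ->
  (forall s, t0 <= s -> (forall s', a < s' < s -> P s') ->
     exists d, 0 < d /\ forall s', s <= s' < s + d -> P s') ->
  forall s, a < s -> P s.
Proof.
  intros Hat base step s Hs.
  destruct (Rlt_le_dec s t0) as [Hlt | Hge]; [apply base; lra |].
  apply NNPP; intro notPs.
  set (below_bad := fun x => forall b, t0 <= b -> ~ P b -> x <= b).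
  assert (bounded : bound below_bad) by (exists s; intros x Hx; apply Hx; assumption).
  assert (t0_below : below_bad t0) by (intros b Hb _; exact Hb).
  destruct (completeness below_bad bounded (ex_intro _ t0 t0_below)) as [M [Mub Mlub]].
  assert (t0M : t0 <= M) by (apply Mub, t0_below).
  assert (M_below : below_bad M)
    by (intros b Hb nPb; apply Mlub; intros x Hx; apply Hx; assumption).
  destruct (step M t0M) as [d [Hd Pd]].
  { intros s' Hs'. apply NNPP; intro nPs'.
    destruct (Rlt_le_dec s' t0) as [| t0s']; [apply nPs', base; lra |].
    pose proof (M_below s' t0s' nPs'). lra. }
  assert (Md_below : below_bad (M + d)).
  { intros b Hb nPb. pose proof (M_below b Hb nPb).
    destruct (Rlt_le_dec b (M + d)); [exfalso; apply nPb, Pd; lra | assumption]. }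
  pose proof (Mub _ Md_below). lra.
Qed.

Lemma left_lim_agree (w w' : R -> nat) (a s : R) (i : nat) :
  a < s -> (forall s', a < s' < s -> w' s' = w s') ->
  left_lim w s i -> left_lim w' s i.
Proof.
  intros Has agree [d [Hd Hw]].
  exists (Rmin d (s - a)). split; [apply Rmin_pos; lra |].
  pose proof (Rmin_l d (s - a)). pose proof (Rmin_r d (s - a)).
  intros s' Hs'. rewrite agree by lra. apply Hw. lra.
Qed.

Lemma right_const_agree (w w' : R -> nat) (s : R) :
  right_const w -> right_const w' -> w s = w' s ->
  exists d, 0 < d /\ forall s', s <= s' < s + d -> w s' = w' s'.
Proof.
  intros Hw Hw' Hs.
  destruct (Hw s) as [d [Hd Wd]]. destruct (Hw' s) as [d' [Hd' Wd']].
  exists (Rmin d d'). split; [apply Rmin_pos; assumption |].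
  pose proof (Rmin_l d d'). pose proof (Rmin_r d d').
  intros s' Hs'. rewrite Wd, Wd' by lra. exact Hs.
Qed.

(* Finitely many robots: if none of them had left limit [i] at [s], they would
   all avoid [i] on a common interval before [s], where [w] equals [i]. *)
Lemma covered_left_lim (m : nat) (loc : nat -> R -> nat) (w : R -> nat)
    (a s : R) (i : nat) :
  a < s -> (forall k, (k < m)%nat -> has_left_lims (loc k)) ->
  left_lim w s i ->
  (forall s', a < s' < s -> exists k, (k < m)%nat /\ loc k s' = w s') ->
  occupied m loc s i.
Proof.
  intros Has lims [dw [Hdw Hw]] covered.
  apply NNPP; intro free.
  destruct (ex_common_radius m (fun k d => forall s', s - d < s' < s -> loc k s' <> i))
    as [D [HD avoid]].
  { intros k d d' Hdd avoid s' Hs'. apply avoid. lra. }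
  { intros k Hk. destruct (lims k Hk s) as [ik [dk [Hdk Hik]]].
    exists dk. split; [assumption |]. intros s' Hs' Hki.
    apply free. exists k. split; [assumption |].
    exists dk. split; [assumption |]. intros s'' Hs''.
    rewrite (Hik s'' Hs''), <- Hki. symmetry. apply Hik, Hs'. }
  set (e := Rmin (Rmin D dw) (s - a)).
  assert (e_pos : 0 < e) by (apply Rmin_pos; [apply Rmin_pos |]; lra).
  assert (e <= D /\ e <= dw /\ e <= s - a).
  { pose proof (Rmin_l (Rmin D dw) (s - a)). pose proof (Rmin_r (Rmin D dw) (s - a)).
    pose proof (Rmin_l D dw). pose proof (Rmin_r D dw). unfold e. lra. }
  destruct (covered (s - e / 2)) as [k [Hk Hkw]]; [lra |].
  apply (avoid k Hk (s - e / 2)); [lra |]. rewrite Hkw. apply Hw. lra.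
Qed.

Lemma dist_on_common_ray (x y x' y' : R) :
  let d := sqrt (x ^ 2 + y ^ 2) in let d' := sqrt (x' ^ 2 + y' ^ 2) in
  0 < d -> 0 < d' -> x / d = x' / d' -> y / d = y' / d' ->
  (x - x') ^ 2 + (y - y') ^ 2 = (d - d') ^ 2.
Proof.
  intros d d' Hd Hd' Hx Hy.
  assert (dd : d * d = x ^ 2 + y ^ 2)
    by (apply sqrt_sqrt; apply Rplus_le_le_0_compat; apply pow2_ge_0).
  set (e1 := x / d) in *. set (e2 := y / d) in *.
  assert (Ex : x = e1 * d) by (unfold e1; field; lra).
  assert (Ey : y = e2 * d) by (unfold e2; field; lra).
  assert (Ex' : x' = e1 * d') by (rewrite Hx; field; lra).
  assert (Ey' : y' = e2 * d') by (rewrite Hy; field; lra).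
  assert (unit : e1 ^ 2 + e2 ^ 2 = 1).
  { rewrite Ex, Ey in dd.
    assert (zero : (e1 ^ 2 + e2 ^ 2 - 1) * (d * d) = 0) by nra.
    apply Rmult_integral in zero. destruct zero; nra. }
  rewrite Ex, Ey, Ex', Ey'.
  replace ((e1 * d - e1 * d') ^ 2 + (e2 * d - e2 * d') ^ 2)
    with ((e1 ^ 2 + e2 ^ 2) * (d - d') ^ 2) by ring.
  rewrite unit. ring.
Qed.

(* Equal link positions put both neighbours on one ray from [ctr i] at
   distances in [(2, 2 + eps]], so their centers would be less than [eps]
   apart, while disjointness demands more than [2]. *)
Lemma link_pos_inj (n : nat) (ctr : nat -> point) (eps : R) (i j j' : nat) :
  disjoint_unit_circles n ctr -> eps < 1 / 2 ->
  potential_link n ctr eps i j -> potential_link n ctr eps i j' ->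
  link_pos ctr i j = link_pos ctr i j' -> j = j'.
Proof.
  intros disj Heps [Hi [Hj [Hij Hd]]] [_ [Hj' [Hij' Hd']]] same.
  destruct (Nat.eq_dec j j') as [| Hne]; [assumption | exfalso].
  pose proof (disj i j Hi Hj Hij) as far. pose proof (disj i j' Hi Hj' Hij') as far'.
  pose proof (disj j j' Hj Hj' Hne) as far_jj'.
  assert (Hdist : forall p q : point, Defs.dist p q
            = sqrt ((fst q - fst p) ^ 2 + (snd q - snd p) ^ 2))
    by (intros p q; unfold Defs.dist; f_equal; ring).
  unfold link_pos in same. injection same as Hx Hy.
  apply Rplus_eq_reg_l in Hx, Hy.
  rewrite !Hdist in Hd, Hd', far, far', far_jj'; rewrite 2!Hdist in Hx, Hy.
  set (x := fst (ctr j) - fst (ctr i)) in *. set (y := snd (ctr j) - snd (ctr i)) in *.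
  set (x' := fst (ctr j') - fst (ctr i)) in *. set (y' := snd (ctr j') - snd (ctr i)) in *.
  assert (ray : (x - x') ^ 2 + (y - y') ^ 2
                = (sqrt (x ^ 2 + y ^ 2) - sqrt (x' ^ 2 + y' ^ 2)) ^ 2)
    by (apply dist_on_common_ray; lra).
  replace ((fst (ctr j') - fst (ctr j)) ^ 2 + (snd (ctr j') - snd (ctr j)) ^ 2)
    with ((x - x') ^ 2 + (y - y') ^ 2) in far_jj' by (unfold x, x', y, y'; ring).
  rewrite ray, <- pow2_abs, sqrt_pow2 in far_jj' by apply Rabs_pos.
  revert far_jj'. unfold Rabs. destruct (Rcase_abs _); lra.
Qed.

Section Runs.

Variables (n m : nat) (ctr : nat -> point) (f g : nat -> R)
  (E : nat -> nat -> Prop) (init : nat -> nat) (loc : nat -> R -> nat).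

Hypothesis E_sym : forall i j, E i j -> E j i.
Hypothesis at_link_inj : forall i j j' t, E i j -> E i j' ->
  at_link ctr f g i j t -> at_link ctr f g i j' t -> j = j'.
Hypothesis sync : synchronized ctr f g E.
Hypothesis run : partial_SCS_run n m ctr f g E init loc.

Lemma run_right_const (k : nat) : (k < m)%nat -> right_const (loc k).
Proof. intros Hk. destruct run as [_ [_ robots]]. apply robots, Hk. Qed.

Lemma run_left_lims (k : nat) : (k < m)%nat -> has_left_lims (loc k).
Proof. intros Hk. destruct run as [_ [_ robots]]. apply robots, Hk. Qed.

Lemma run_shift (k : nat) (t : R) (i : nat) :
  (k < m)%nat -> 0 <= t -> left_lim (loc k) t i ->
  (exists j, E i j /\ at_link ctr f g i j t /\ ~ occupied m loc t j /\ loc k t = j) \/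
  (~ (exists j, E i j /\ at_link ctr f g i j t /\ ~ occupied m loc t j) /\ loc k t = i).
Proof. intros Hk. destruct run as [_ [_ robots]]. apply robots, Hk. Qed.

Lemma ring_step_occupied (t0 s : R) (i0 i : nat) (v : R -> nat) :
  0 <= s -> t0 <= s -> ring_traj ctr f g E t0 i0 v -> left_lim v s i ->
  occupied m loc s i -> exists k, (k < m)%nat /\ loc k s = v s.
Proof.
  intros Hs Ht0s [_ [_ [_ ring]]] vi [k [Hk ki]].
  destruct (ring s i Ht0s vi) as [[j [Eij [Aij vj]]] | [no_link vi']].
  - rewrite vj.
    destruct (run_shift k s i Hk Hs ki) as [[j' [Eij' [Aij' [_ kj']]]] | [stuck ki']].
    + exists k. split; [assumption |]. rewrite kj'. apply (at_link_inj i j' j s); assumption.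
    + assert (occupied m loc s j) as [k2 [Hk2 k2j]]
        by (apply NNPP; intro free; apply stuck; exists j; auto).
      exists k2. split; [assumption |].
      destruct (run_shift k2 s j Hk2 Hs k2j) as [[j3 [Ej3 [Aj3 [free3 _]]]] | [_ stays]];
        [exfalso | exact stays].
      assert (j3 = i) as ->
        by (apply (at_link_inj j j3 i s); auto; apply (sync i j Eij s); assumption).
      apply free3. exists k. auto.
  - exists k. split; [assumption |]. rewrite vi'.
    destruct (run_shift k s i Hk Hs ki) as [[j' [Eij' [Aij' _]]] | [_ ki']];
      [exfalso; apply no_link; exists j'; auto | exact ki'].
Qed.

Lemma starving_ring_step (u : nat) (t0 s : R) (i0 i : nat) (v : R -> nat) :
  (u < m)%nat -> starving m ctr f g E loc u -> 0 <= s -> t0 <= s ->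
  ring_traj ctr f g E t0 i0 v -> left_lim v s i -> left_lim (loc u) s i ->
  loc u s = v s.
Proof.
  intros Hu starves Hs Ht0s [_ [_ [_ ring]]] vi ui.
  destruct (run_shift u s i Hu Hs ui) as [[j' [Eij' [Aij' [_ uj']]]] | [stuck ui']];
    destruct (ring s i Ht0s vi) as [[j [Eij [Aij vj]]] | [no_link vi']].
  - rewrite uj', vj. apply (at_link_inj i j' j s); assumption.
  - exfalso. apply no_link. exists j'. auto.
  - exfalso. apply stuck. exists j. split; [| split]; try assumption.
    apply (starves s i j); assumption.
  - rewrite ui', vi'. reflexivity.
Qed.

Lemma ring_stays_occupied (u : nat) (t0 : R) (iu : nat) (r : R -> nat) :
  (u < m)%nat -> 0 <= t0 -> left_lim (loc u) t0 iu -> ring_traj ctr f g E t0 iu r ->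
  exists a, a < t0 /\ forall s, a < s -> exists k, (k < m)%nat /\ loc k s = r s.
Proof.
  intros Hu Ht0 [d0 [Hd0 u_iu]] ring.
  pose proof ring as [r_rc [r_lims [r_before _]]].
  exists (t0 - d0). split; [lra |].
  apply real_induction with (t0 := t0); [lra | |].
  - intros s Hs. exists u. split; [assumption |]. rewrite u_iu, r_before by lra; reflexivity.
  - intros s Ht0s covered.
    destruct (r_lims s) as [i ri].
    assert (occupied m loc s i)
      by (apply (covered_left_lim m loc r (t0 - d0)); auto; [lra | apply run_left_lims]).
    destruct (ring_step_occupied t0 s iu i r) as [k [Hk kr]]; auto; [lra |].
    destruct (right_const_agree (loc k) r s (run_right_const k Hk) r_rc kr)
      as [d [Hd agree]].
    exists d. split; [assumption |]. intros s' Hs'. exists k. auto.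
Qed.

Lemma starving_follows_ring (u : nat) (t0 : R) (iu : nat) (r : R -> nat) :
  (u < m)%nat -> 0 <= t0 -> left_lim (loc u) t0 iu -> ring_traj ctr f g E t0 iu r ->
  starving m ctr f g E loc u ->
  exists a, a < t0 /\ forall s, a < s -> loc u s = r s.
Proof.
  intros Hu Ht0 [d0 [Hd0 u_iu]] ring starves.
  pose proof ring as [r_rc [r_lims [r_before _]]].
  exists (t0 - d0). split; [lra |].
  apply real_induction with (t0 := t0); [lra | |].
  - intros s Hs. rewrite u_iu, r_before by lra; reflexivity.
  - intros s Ht0s follows.
    destruct (r_lims s) as [i ri].
    assert (ui : left_lim (loc u) s i) by (apply (left_lim_agree r _ (t0 - d0)); auto; lra).
    assert (us : loc u s = r s)
      by (apply (starving_ring_step u t0 s iu i); auto; lra).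
    exact (right_const_agree (loc u) r s (run_right_const u Hu) r_rc us).
Qed.

Lemma not_starving_at_crossing (u u' : nat) (t0 T : R) (iu iu' : nat)
    (r r' : R -> nat) (i j : nat) :
  (u < m)%nat -> (u' < m)%nat -> 0 <= t0 -> t0 <= T ->
  left_lim (loc u) t0 iu -> ring_traj ctr f g E t0 iu r ->
  left_lim (loc u') t0 iu' -> ring_traj ctr f g E t0 iu' r' ->
  reaches_crossing ctr f g E r T i j -> left_lim r' T j ->
  ~ starving m ctr f g E loc u.
Proof.
  intros Hu Hu' Ht0 HT ul ring ul' ring' [Eij [ri Aij]] r'j starves.
  destruct (starving_follows_ring u t0 iu r Hu Ht0 ul ring starves) as [a [Ha follows]].
  destruct (ring_stays_occupied u' t0 iu' r' Hu' Ht0 ul' ring') as [a' [Ha' covered]].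
  assert (occupied m loc T j)
    by (apply (covered_left_lim m loc r' a'); [lra | apply run_left_lims | exact r'j |];
        intros s' Hs'; apply covered; lra).
  assert (left_lim (loc u) T i)
    by (apply (left_lim_agree r _ a); [lra | intros s' Hs'; apply follows; lra | exact ri]).
  apply (starves T i j); auto; lra.
Qed.

End Runs.

Theorem lemma5 (n m : nat) (ctr : nat -> point) (eps : R)
  (E : nat -> nat -> Prop) (f g : nat -> R)
  (init : nat -> nat) (loc : nat -> R -> nat)
  (u u' : nat) (t0 : R) (iu iu' : nat) (r r' : R -> nat)
  (L : R) (i j : nat) (c : point) :
  disjoint_unit_circles n ctr ->
  0 < eps < 1 / 2 ->
  graph_connected n (potential_link n ctr eps) ->
  comm_graph n ctr eps E ->
  schedule n f g ->
  SCS ctr f g E ->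
  partial_SCS_run n m ctr f g E init loc ->
  (u < m)%nat -> (u' < m)%nat ->
  0 <= t0 ->
  (* u lies on ring r and u' on ring r' (positions just before time t0) *)
  left_lim (loc u) t0 iu -> ring_traj ctr f g E t0 iu r ->
  left_lim (loc u') t0 iu' -> ring_traj ctr f g E t0 iu' r' ->
  (* r and r' cross each other at c = crossing point of C_i, C_j *)
  c = crossing_point ctr i j ->
  (* paths of the same length L from u to c along r and from u' to c along r' *)
  0 <= L ->
  reaches_crossing ctr f g E r (t0 + L / (2 * PI)) i j ->
  reaches_crossing ctr f g E r' (t0 + L / (2 * PI)) j i ->
  ~ starving m ctr f g E loc u /\ ~ starving m ctr f g E loc u'.
Proof.
  intros disj Heps _ [E_link [E_sym _]] _ [sync _] run Hu Hu' Ht0 ul ring ul' ring' _ HL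
    cross cross'.
  assert (at_link_inj : forall a b b' t, E a b -> E a b' ->
            at_link ctr f g a b t -> at_link ctr f g a b' t -> b = b').
  { intros a b b' t Eab Eab' Ab Ab'.
    apply (link_pos_inj n ctr eps a b b'); auto; [lra |].
    unfold at_link in Ab, Ab'. rewrite <- Ab, <- Ab'. reflexivity. }
  assert (HT : t0 <= t0 + L / (2 * PI)).
  { pose proof PI_RGT_0.
    assert (0 <= L / (2 * PI))
      by (unfold Rdiv; apply Rmult_le_pos; [| left; apply Rinv_0_lt_compat]; lra).
    lra. }
  split.
  - destruct cross' as [_ [r'j _]].
    exact (not_starving_at_crossing n m ctr f g E init loc E_sym at_link_inj sync run
             u u' t0 _ iu iu' r r' i j Hu Hu' Ht0 HT ul ring ul' ring' cross r'j).
  - destruct cross as [_ [ri _]].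
    exact (not_starving_at_crossing n m ctr f g E init loc E_sym at_link_inj sync run
             u' u t0 _ iu' iu r' r j i Hu' Hu Ht0 HT ul' ring' ul ring cross' ri).
Qed.
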